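(* There is a function $\varepsilon:\mathbb{N}\to[0,\infty)$ with $\varepsilon(n)\to 0$ as $n\to\infty$ such that the following holds for every positive integer $n$. Let $\mathcal{S}\subseteq 2^{[n]}$ be a family of subsets of $[n]=\{1,\dots,n\}$. Suppose that for every $n$-element poset $(P,\preceq_P)$ there is an enumeration $v_1,\dots,v_n$ of the elements of $P$ such that for each $j\in[n]$, $$\{i\in[n]\mid v_i\preceq_P v_j\}\in\mathcal{S}.$$ Then $|\mathcal{S}|\geq 2^{(1-\varepsilon(n))n}$. *)

From Stdlib Require Import Reals.
From mathcomp Require Import all_boot.
Set Implicit Arguments. Unset Strict Implicit. Unset Printing Implicit Defensive.

Definition is_partial_order (T : Type) (le : rel T) : Prop :=
  reflexive le /\ antisymmetric le /\ transitive le.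

Definition realizes_all_posets (n : nat) (S : {set {set 'I_n}}) : Prop :=
  forall (T : finType) (le : rel T),
    #|T| = n -> is_partial_order le ->
    exists v : 'I_n -> T, bijective v /\
      forall j : 'I_n, [set i : 'I_n | le (v i) (v j)] \in S.

(* A relation F between m "bottom" and r "top" points, m + r = n, defines a
   poset of height two. An enumeration realizing it, together with the down-sets
   of the r top points (members of S), determines F, so 2^(m r) <= n^n |S|^r.
   With ell = floor(log2 n) + 1 and r = ell * kappa, kappa ~ sqrt(n / ell), we
   have n^n <= 2^(ell n) and r^2 <= ell n, which leaves |S| >= 2^((1 - 2/kappa) n);
   and kappa tends to infinity with n. *)

From Stdlib Require Import Reals Lra.
From mathcomp Require Import all_boot zify.
Set Implicit Arguments. Unset Strict Implicit. Unset Printing Implicit Defensive.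
(* [%R] now denotes MathComp's ring_scope. *)
Delimit Scope R_scope with Re.

Section BipartitePoset.
Variables (m r : nat) (F : {set 'I_m * 'I_r}).

Definition bipartite_le (x y : 'I_m + 'I_r) : bool :=
  match x, y with
  | inl a, inl a' => a == a'
  | inr k, inr k' => k == k'
  | inl a, inr k => (a, k) \in F
  | inr _, inl _ => false
  end.

Lemma bipartite_le_partial_order : is_partial_order bipartite_le.
Proof.
split; first by case=> x /=.
split.
  by case=> [a|k] [b|l] /=; rewrite ?andbF // => /andP[/eqP ->].
by case=> [a|k] [b|l] [c|o] //= => [/eqP-> | /eqP-> | Fbk /eqP<- | /eqP->].
Qed.

End BipartitePoset.

Lemma realizes_all_posets_count n m r (S : {set {set 'I_n}}) :
  m + r = n -> realizes_all_posets S -> 2 ^ (m * r) <= n ^ n * #|S| ^ r.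
Proof.
move=> mrn realS.
have card_points : #|{: 'I_m + 'I_r}| = n by rewrite card_sum !card_ord.
pose codes := setX [set: {ffun 'I_n -> 'I_m + 'I_r}]
                   [set g : {ffun 'I_r -> {set 'I_n}} | g \in ffun_on (mem S)].
pose decode (c : {ffun 'I_n -> 'I_m + 'I_r} * {ffun 'I_r -> {set 'I_n}}) :=
  [set ak : 'I_m * 'I_r | [exists i, (c.1 i == inl ak.1) && (i \in c.2 ak.2)]].
have -> : n ^ n * #|S| ^ r = #|codes|.
  rewrite cardsX cardsT card_ffun card_points card_ord; congr (_ * _).
  by rewrite cardsE card_ffun_on card_ord.
have -> : 2 ^ (m * r) = #|powerset [set: 'I_m * 'I_r]|.
  by rewrite card_powerset cardsT card_prod !card_ord.
apply: leq_trans (leq_imset_card decode codes).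
apply/subset_leq_card/subsetP => F _.
have [v [[w _ wv] downS]] :=
  realS _ (bipartite_le F) card_points (bipartite_le_partial_order F).
pose down := [ffun k => [set i | bipartite_le F (v i) (inr k)]].
apply/imsetP; exists ([ffun i => v i], down).
  rewrite in_setX in_setT inE; apply/ffun_onP => k.
  by have := downS (w (inr k)); rewrite wv ffunE.
apply/setP=> -[a k]; rewrite inE; apply/idP/existsP => [Fak | [i /andP[/eqP vi]]].
  by exists (w (inl a)); rewrite /= !ffunE wv eqxx inE /= wv.
by rewrite /= ffunE in vi; rewrite /= ffunE inE vi.
Qed.

Definition ell (n : nat) : nat := (trunc_log 2 n).+1.
Definition kappa (n : nat) : nat := maxn 1 (Nat.sqrt (n %/ ell n)).

Lemma kappa_gt0 n : 0 < kappa n.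
Proof. by rewrite leq_max. Qed.

Lemma ell_le n : 0 < n -> ell n <= n.
Proof.
move=> n0; have := trunc_logP (isT : 1 < 2) n0.
exact/leq_trans/ltn_expl.
Qed.

Lemma expnn_le_exp2_ell n : n ^ n <= 2 ^ (ell n * n).
Proof.
case: n => // n; rewrite expnM leq_exp2r //.
exact/ltnW/trunc_log_ltn.
Qed.

Lemma ell_kappa_sq_le n : 0 < n -> ell n * (kappa n * kappa n) <= n.
Proof.
move=> n0; rewrite /kappa; set s := Nat.sqrt _.
have [-> | s_gt0] := posnP s; first by rewrite muln1 ell_le.
have sqrt_sq : s * s <= n %/ ell n.
  by apply/leP; have [] := Nat.sqrt_spec (n %/ ell n) (Nat.le_0_l _).
by rewrite (maxn_idPr s_gt0) mulnC -leq_divRL.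
Qed.

Lemma mul_succ_le_exp2 t : t * t.+1 <= 2 ^ t.+1.
Proof.
elim: t => // -[|[|t]] // IH.
rewrite expnS; nia.
Qed.

Lemma kappa_unbounded k n : 2 ^ (2 * (k * k)) <= n -> k <= kappa n.
Proof.
move=> kn; have n0 : 0 < n by apply: leq_trans kn; rewrite expn_gt0.
have klog : 2 * (k * k) <= trunc_log 2 n by apply: trunc_log_max.
have := trunc_logP (isT : 1 < 2) n0; have := mul_succ_le_exp2 (trunc_log 2 n).
rewrite expnS => logsq log_n.
have kk : k * k <= n %/ ell n by rewrite leq_divRL // /ell; nia.
apply: leq_trans (leq_maxr 1 _).
rewrite -{1}(Nat.sqrt_square k); exact/leP/Nat.sqrt_le_mono/leP.
Qed.

Lemma realizes_all_posets_exp2_le n (S : {set {set 'I_n}}) :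
  0 < n -> realizes_all_posets S ->
  2 ^ (ell n * kappa n * n) <= 2 ^ (2 * ell n * n) * #|S| ^ (ell n * kappa n).
Proof.
move=> n0 realS; set l := ell n; set r := l * kappa n.
have lKK := ell_kappa_sq_le n0; rewrite -/l in lKK.
have r_le_n : r <= n by have := kappa_gt0 n; nia.
have rr_le : r * n <= (n - r) * r + l * n by rewrite mulnBl; nia.
apply: leq_trans (leq_pexp2l (isT : 0 < 2) rr_le) _.
have count := realizes_all_posets_count (subnK r_le_n) realS.
rewrite expnD -mulnA mul2n -addnn expnD mulnC -!mulnA leq_pmul2l ?expn_gt0 //.
by apply: leq_trans count _; rewrite leq_mul2r expnn_le_exp2_ell orbT.
Qed.

Lemma INR_expn a k : INR (a ^ k) = (INR a ^ k)%Re.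
Proof. by elim: k => // k IH; rewrite expnS mult_INR IH. Qed.

Lemma Rpower2_le_of_exp2_le a b r s :
  0 < r -> 2 ^ a <= 2 ^ b * s ^ r -> (Rpower 2 ((INR a - INR b) / INR r) <= INR s)%Re.
Proof.
move=> r0 ineq.
have s0 : 0 < s.
  by case: s ineq => //; rewrite exp0n // muln0 leqn0 expn_eq0.
have INR2 : INR 2 = 2%Re by rewrite /=; lra.
have /leP/le_INR := ineq; rewrite mult_INR !INR_expn INR2 => {}ineq.
have r_pos : (0 < INR r)%Re by apply/lt_0_INR/ltP.
have s_pos : (0 < INR s)%Re by apply/lt_0_INR/ltP.
have pow2_pos : (0 < 2 ^ b)%Re by apply: pow_lt; lra.
apply: Rnot_lt_le => lt.
have := Rlt_Rpower_l _ _ _ r_pos (conj s_pos lt).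
rewrite Rpower_mult Rpower_pow //.
have -> : ((INR a - INR b) / INR r * INR r = INR a + - INR b)%Re by field; lra.
rewrite Rpower_plus Rpower_Ropp !Rpower_pow; try lra.
move/(Rmult_lt_compat_l _ _ _ pow2_pos).
rewrite (Rmult_comm (2 ^ a)) -Rmult_assoc Rinv_r; lra.
Qed.

Definition eps (n : nat) : R := (2 / INR (kappa n))%Re.

Lemma INR_kappa_gt0 n : (0 < INR (kappa n))%Re.
Proof. exact/lt_0_INR/ltP/kappa_gt0. Qed.

Lemma eps_cv : Un_cv eps 0.
Proof.
apply: (Un_cv_ext (fun n => / (INR (kappa n) / 2))%Re).
  by move=> n; rewrite /eps; field; have := INR_kappa_gt0 n; lra.
apply: cv_infty_cv_0 => M.
have [k Mk] := INR_archimed 1 (2 * M) Rlt_0_1.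
exists (2 ^ (2 * (k * k))) => n /leP /kappa_unbounded /leP /le_INR.
move=> k_le; lra.
Qed.

Theorem proposition4p1 :
  exists eps : nat -> R,
    (forall n : nat, Rle 0 (eps n)) /\ Un_cv eps R0 /\
    forall (n : nat) (S : {set {set 'I_n}}),
      (0 < n)%N -> realizes_all_posets S ->
      Rle (Rpower (INR 2) (Rmult (Rminus (INR 1) (eps n)) (INR n))) (INR #|S|).
Proof.
exists eps; split; [|split].
- by move=> n; apply/Rlt_le/Rdiv_lt_0_compat/INR_kappa_gt0; lra.
- exact: eps_cv.
move=> n S n0 realS.
have r0 : 0 < ell n * kappa n by rewrite muln_gt0 kappa_gt0.
have := Rpower2_le_of_exp2_le r0 (realizes_all_posets_exp2_le n0 realS).
have INR2 : INR 2 = 2%Re by rewrite /=; lra.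
suff -> : ((INR 1 - eps n) * INR n =
           (INR (ell n * kappa n * n) - INR (2 * ell n * n)) / INR (ell n * kappa n))%Re.
  by rewrite INR2.
have ell_pos : (0 < INR (ell n))%Re by apply/lt_0_INR/ltP.
have kappa_pos := INR_kappa_gt0 n.
by rewrite /eps !mult_INR INR2 INR_1; field; lra.
Qed.
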